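(* Every bounded monomial polyhedron $\mathscr{U}\subset\mathbb{C}^n$ is contained in the unit polydisc $\mathbb{D}^n$, and its boundary contains the unit torus $\mathbb{T}^n=\{z:|z_j|=1,\ 1\le j\le n\}$.
   Context: A monomial polyhedron defined by $B\in M_n(\mathbb{Q})$ with rows $b^j$ is $\mathscr{U}=\{z\in\mathbb{C}^n: \prod_{k}|z_k|^{b^j_k}<1 \text{ for all } j\}$, where $z$ is excluded if some product is undefined due to division by zero (some $z_k=0$ with $b^j_k<0$); it is assumed to be a nonempty domain. *)

From HB Require Import structures.
From mathcomp Require Import all_boot all_order all_algebra.
From mathcomp Require Import complex.
From mathcomp Require Import all_classical all_reals all_analysis.
Export Order.TTheory GRing.Theory Num.Theory.
Export numFieldNormedType.Exports.

Set Implicit Arguments.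
Unset Strict Implicit.
Unset Printing Implicit Defensive.

Local Open Scope ring_scope.
Local Open Scope classical_set_scope.

(* The complex numbers over a real closed field R, R[i], viewed as a
   numClosedFieldType; it carries the canonical normed/topological structure
   given by the modulus, and 'rV[Cplx R]_n (= C^n) carries the product
   topology / sup norm. *)
Definition Cplx (R : rcfType) : numClosedFieldType := R[i].

Definition cmod (R : rcfType) (z : Cplx R) : R := ComplexField.Normc.normc z.

Definition boundary (T : topologicalType) (A : set T) : set T :=
  closure A `\` interior A.

(* Monomial polyhedron defined by B in M_n(Q) (rows b^j):
   z is in U iff for every row j, no coordinate z_k with b^j_k < 0 vanishes
   (otherwise the product is undefined and z is excluded) and
   prod_k |z_k|^{b^j_k} < 1.  Note powR 0 b = 0 for b > 0 and 1 for b = 0. *)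
Definition monomial_polyhedron (R : realType) (n : nat) (B : 'M[rat]_n)
  : set 'rV[Cplx R]_n :=
  [set z | forall j : 'I_n,
      (forall k : 'I_n, B j k < 0 -> z ord0 k != 0) /\
      \prod_(k < n) powR (cmod (z ord0 k)) (ratr (B j k)) < 1].

Definition unit_polydisc (R : realType) (n : nat) : set 'rV[Cplx R]_n :=
  [set z | forall k : 'I_n, cmod (z ord0 k) < 1].

Definition unit_torus (R : realType) (n : nat) : set 'rV[Cplx R]_n :=
  [set z | forall k : 'I_n, cmod (z ord0 k) = 1].

Arguments monomial_polyhedron R {n} B.
Arguments unit_polydisc : clear implicits.
Arguments unit_torus : clear implicits.

From HB Require Import structures.
From mathcomp Require Import all_boot all_order all_algebra.
From mathcomp Require Import complex.
From mathcomp Require Import all_classical all_reals all_analysis.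
Import Order.TTheory GRing.Theory Num.Theory.
Import numFieldNormedType.Exports.
Local Open Scope ring_scope.
Local Open Scope classical_set_scope.

(* The whole argument rests on one invariance of U = {z : prod_k |z_k|^{b^j_k} < 1}:
   if w is in U and has no zero coordinate, then so is every point with
   coordinates u_k |w_k|^s, for s > 0 and |u_k| = 1, because the defining
   monomials get raised to the power s (lemma [power_scale_mem]).
   Openness of U lets us push any z in U to such a w with |w_k| > |z_k|
   ([outward_nonzero_point]).
   - Polydisc: if |z_k| >= 1 for some z in U, then |w_k| > 1 and |w_k|^s is
     unbounded as s -> +oo, contradicting boundedness ([polydisc_contains]).
   - Torus: a point t of the torus is not in U, since every monomial equals 1
     there ([torus_notin]); but t is a limit of points t_k |w_k|^s of U as
     s -> 0+, where |w_k| < 1 by the first part ([torus_in_closure]). *)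

Section ComplexModulus.
Context {R : realType}.
Local Notation C := (Cplx R).

Lemma cmodE (z : C) : `|z| = (cmod z)%:C%C.
Proof. by []. Qed.

Lemma cmod_ge0 (z : C) : 0 <= cmod z.
Proof. by have := normr_ge0 z; rewrite cmodE (_ : 0 = 0%:C%C) // lecR. Qed.

Lemma cmod_gt0 {z : C} : z != 0 -> 0 < cmod z.
Proof.
move=> z0; rewrite lt_neqAle cmod_ge0 andbT eq_sym.
by apply: contra z0 => /eqP/Normc.eq0_normc ->.
Qed.

Lemma cmod0 : cmod (0 : C) = 0.
Proof. exact: Normc.normc0. Qed.

Lemma cmodM (x y : C) : cmod (x * y) = cmod x * cmod y.
Proof. exact: Normc.normcM. Qed.

Lemma cmodN (x : C) : cmod (- x) = cmod x.
Proof. exact: normcN. Qed.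

Lemma cmod_real (r : R) : cmod (r%:C%C) = `|r|.
Proof. by rewrite /cmod /ComplexField.Normc.normc /= expr0n /= addr0 sqrtr_sqr. Qed.

Lemma pos_radius (e : C) : 0 < e -> e = (cmod e)%:C%C /\ 0 < cmod e.
Proof.
move=> e0; have ee : e = (cmod e)%:C%C by rewrite -cmodE gtr0_norm.
by split=> //; move: e0; rewrite {1}ee (_ : 0 = 0%:C%C) // ltcR.
Qed.

Lemma ball_cmod (x y : C) (e : R) : ball x (e%:C%C) y <-> cmod (x - y) < e.
Proof. by rewrite /ball /= cmodE ltcR. Qed.

Definition radial_shift (x : C) (d : R) : C :=
  if x == 0 then d%:C%C else x * (1 + d / cmod x)%:C%C.

Lemma cmod_radial_shift (x : C) (d : R) : 0 <= d ->
  cmod (radial_shift x d) = cmod x + d.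
Proof.
move=> d0; rewrite /radial_shift; case: eqP => [->|/eqP x0].
  by rewrite cmod_real cmod0 add0r ger0_norm.
have x0' := cmod_gt0 x0.
rewrite cmodM cmod_real ger0_norm; last by rewrite addr_ge0 // divr_ge0 // ltW.
by rewrite mulrDr mulr1 mulrCA divff ?mulr1 // gt_eqF.
Qed.

Lemma cmod_sub_radial_shift (x : C) (d : R) : 0 <= d ->
  cmod (x - radial_shift x d) = d.
Proof.
move=> d0; rewrite /radial_shift; case: eqP => [->|/eqP x0].
  by rewrite sub0r cmodN cmod_real ger0_norm.
rewrite rmorphD rmorph1 mulrDr mulr1 opprD addrA subrr sub0r cmodN cmodM.
by rewrite cmod_real ger0_norm ?divr_ge0 ?cmod_ge0 // mulrCA divff ?mulr1 // gt_eqF ?cmod_gt0.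
Qed.

End ComplexModulus.

Section RealPowers.
Context {R : realType}.

Lemma powR_expR (a s : R) : 0 < a -> powR a s = expR (s * ln a).
Proof. by move=> a0; rewrite /powR gt_eqF. Qed.

Lemma powR_prod n (a b : 'I_n -> R) (s : R) : (forall k, 0 <= a k) ->
  \prod_(k < n) powR (powR (a k) s) (b k) = powR (\prod_(k < n) powR (a k) (b k)) s.
Proof.
move=> a0; under eq_bigr do rewrite powRAC.
set L := (X in X = _); set Q := (X in _ = powR X s).
suff [//] : L = powR Q s /\ 0 <= Q.
apply: (big_ind2 (fun x y => x = powR y s /\ 0 <= y)).
- by rewrite powR1.
- move=> x1 x2 y1 y2 [-> h1] [-> h2]; split; last exact: mulr_ge0.
  by rewrite powRM.
- by move=> k _; split=> //; exact: powR_ge0.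
Qed.

Lemma one_sub_powR_le (m s : R) : 0 < m -> 1 - powR m s <= - (s * ln m).
Proof.
move=> m0; rewrite powR_expR // lerBlDr -lerBlDl opprK addrC [_ + 1]addrC.
exact: expR_ge1Dx.
Qed.

End RealPowers.

Section MonomialPolyhedron.
Variables (R : realType) (n : nat) (B : 'M[rat]_n).
Local Notation C := (Cplx R).
Local Notation U := (monomial_polyhedron R B).

Lemma power_scale_mem (w : 'rV[C]_n) (u : 'I_n -> C) (s : R) :
  U w -> (forall k, w ord0 k != 0) -> 0 < s -> (forall k, cmod (u k) = 1) ->
  U (\row_k (u k * (powR (cmod (w ord0 k)) s)%:C%C)).
Proof.
move=> Uw wn0 s0 u1.
have cv k : cmod ((\row_k (u k * (powR (cmod (w ord0 k)) s)%:C%C)) ord0 k)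
    = powR (cmod (w ord0 k)) s.
  by rewrite mxE cmodM u1 mul1r cmod_real ger0_norm // powR_ge0.
move=> j; split.
  move=> k _; apply/eqP => /(congr1 (@cmod R)); rewrite cv cmod0.
  by move/eqP; rewrite gt_eqF // powR_gt0 // cmod_gt0.
under eq_bigr do rewrite cv.
rewrite powR_prod; last by move=> k; exact: cmod_ge0.
rewrite [X in _ < X](_ : 1 = powR 1 s); last by rewrite powR1.
have [_ P1] := Uw j.
apply: gt0_ltr_powR => //; rewrite nnegrE ?ler01 //.
by apply: prodr_ge0 => k _; exact: powR_ge0.
Qed.

Lemma outward_nonzero_point (z : 'rV[C]_n) : open U -> U z ->
  exists w, [/\ U w, (forall k, w ord0 k != 0) &
                     (forall k, cmod (z ord0 k) < cmod (w ord0 k))].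
Proof.
move=> oU Uz; have : nbhs z U by apply: open_nbhs_nbhs.
move=> /nbhs_ballP [e /pos_radius [ee e0] sub]; rewrite ee in sub.
set d := cmod e / 2.
have d0 : 0 < d by rewrite divr_gt0.
pose w := \row_k radial_shift (z ord0 k) d.
have cw k : cmod (w ord0 k) = cmod (z ord0 k) + d.
  by rewrite mxE cmod_radial_shift // ltW.
exists w; split.
- apply: sub; split; first by rewrite (_ : 0 = 0%:C%C) // ltcR.
  move=> i k; rewrite (ord1 i); apply/ball_cmod.
  by rewrite mxE cmod_sub_radial_shift ?ltW // ltr_pdivrMr // ltr_pMr // ltr1n.
- move=> k; apply/eqP => /(congr1 (@cmod R)); rewrite cw cmod0 => /eqP.
  by rewrite gt_eqF // ltr_pwDr // cmod_ge0.
- by move=> k; rewrite cw ltrDl.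
Qed.

Lemma coordinate_bound : bounded_set U ->
  exists c : R, forall z, U z -> forall k, cmod (z ord0 k) < c.
Proof.
move=> [M0 [M0r HM]]; exists (cmod M0 + 2) => z Uz k.
have M0M : M0 < (cmod M0 + 1)%:C%C.
  by apply: le_lt_trans (real_ler_norm M0r) _; rewrite cmodE ltcR ltrDl.
have : ball (0 : 'rV[C]_n) ((cmod M0 + 2)%:C%C) z.
  rewrite mx_norm_ball /ball_ /= sub0r normrN; apply: le_lt_trans (HM _ M0M z Uz) _.
  by rewrite ltcR ltrD2l ltr1n.
by case=> _ /(_ ord0 k) /ball_cmod; rewrite mxE sub0r cmodN.
Qed.

Lemma polydisc_contains : open U -> bounded_set U -> U `<=` unit_polydisc R n.
Proof.
move=> oU bU z Uz k; rewrite ltNge; apply/negP => zk1.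
have [w [Uw wn0 zw]] := outward_nonzero_point z oU Uz.
have [c Hc] := coordinate_bound bU.
set a := cmod (w ord0 k).
have a1 : 1 < a by apply: le_lt_trans zk1 (zw k).
have la : 0 < ln a by exact: ln_gt0.
pose s := `|c| / ln a.
have s0 : 0 < s.
  rewrite divr_gt0 // normr_gt0; apply: contraTneq (Hc _ Uw k) => ->.
  by rewrite -leNgt cmod_ge0.
have := Hc _ (@power_scale_mem w (fun=> 1) s Uw wn0 s0 (fun=> Normc.normc1 R)) k.
rewrite mxE mul1r cmod_real ger0_norm ?powR_ge0 // powR_expR ?(lt_trans ltr01) //.
rewrite /s divfK ?gt_eqF //; apply/negP; rewrite -leNgt.
by apply: le_trans (expR_ge1Dx _); rewrite (le_trans (ler_norm c)) ?lerDr.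
Qed.

(* Every monomial equals 1 on the torus, so the torus misses U. *)
Lemma torus_notin : (0 < n)%N -> unit_torus R n `<=` ~` U.
Proof.
move=> n0 t Tt /(_ (Ordinal n0)) [_].
by under eq_bigr do rewrite Tt powR1; rewrite big1 // ltxx.
Qed.

(* Points of the torus are limits of the points t_k |w_k|^s of U, s -> 0+. *)
Lemma torus_in_closure : (0 < n)%N -> U !=set0 -> open U -> bounded_set U ->
  unit_torus R n `<=` closure U.
Proof.
move=> n0 [z0 Uz0] oU bU t Tt N /nbhs_ballP [e /pos_radius [ee d0] sub].
rewrite ee in sub.
set d := cmod e in d0 *.
have [w [Uw wn0 _]] := outward_nonzero_point z0 oU Uz0.
have w1 k : cmod (w ord0 k) < 1 := polydisc_contains oU bU w Uw k.
pose m := \prod_(k < n) cmod (w ord0 k).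
have m0 : 0 < m by apply: prodr_gt0 => k _; exact: cmod_gt0.
have mk k : m <= cmod (w ord0 k).
  rewrite /m (bigD1 k) //= ler_piMr ?cmod_ge0 //.
  by apply: prodr_ile1 => i _; rewrite cmod_ge0 ltW.
have lm1 : 0 < 1 - ln m.
  by rewrite subr_gt0 (le_lt_trans _ ltr01) // ln_le0 // (le_trans (mk (Ordinal n0))) ?ltW.
pose s := d / (1 - ln m).
have s0 : 0 < s by rewrite divr_gt0.
pose v := \row_k (t ord0 k * (powR (cmod (w ord0 k)) s)%:C%C).
exists v; split; first by apply: power_scale_mem => // k; exact: Tt.
apply: sub; split; first by rewrite (_ : 0 = 0%:C%C) // ltcR.
move=> i k; rewrite (ord1 i); apply/ball_cmod; rewrite mxE.
set r := powR (cmod (w ord0 k)) s.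
have r1 : r <= 1.
  rewrite /r [leRHS](_ : 1 = powR 1 s); last by rewrite powR1.
  by rewrite ge0_ler_powR ?nnegrE ?cmod_ge0 ?ltW.
have rm : powR m s <= r.
  by apply: ge0_ler_powR; rewrite ?nnegrE ?cmod_ge0 ?(ltW s0) ?(ltW m0) ?mk.
rewrite -{1}(mulr1 (t ord0 k)) -mulrBr cmodM Tt mul1r.
have -> : 1 - r%:C%C = (1 - r)%:C%C :> C by rewrite rmorphB rmorph1.
rewrite cmod_real ger0_norm ?subr_ge0 //.
apply: (@le_lt_trans _ _ (1 - powR m s)); first by rewrite lerD2l lerN2.
apply: le_lt_trans (one_sub_powR_le m s m0) _.
rewrite /s -mulrN mulrAC ltr_pdivrMr // ltr_pM2l //.
by rewrite [1 - _]addrC ltrDl ltr01.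
Qed.

End MonomialPolyhedron.

Theorem corollary3p2 (R : realType) (n : nat) (B : 'M[rat]_n) :
  (0 < n)%N ->
  (* U is a domain: nonempty, open and connected *)
  monomial_polyhedron R B !=set0 ->
  open (monomial_polyhedron R B) ->
  connected (monomial_polyhedron R B) ->
  (* U is bounded *)
  bounded_set (monomial_polyhedron R B) ->
  monomial_polyhedron R B `<=` unit_polydisc R n /\
  unit_torus R n `<=` boundary (monomial_polyhedron R B).
Proof.
move=> n0 ne oU _ bU; split; first exact: polydisc_contains.
move=> t Tt; split; first exact: torus_in_closure.
by move=> /interior_subset; apply: torus_notin Tt.
Qed.
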